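(* Under Assumption 1, for the GARCH-2F variance process, with $\varphi=\mathbb{E}\big[\|\boldsymbol{B}+\boldsymbol{b}(\boldsymbol{W}_t)\|\big]$ and $c=\|\boldsymbol{\omega}\|+\mathbb{E}\big[\|\boldsymbol{\alpha}\boldsymbol{f}(\boldsymbol{W}_t)\|\big]<\infty$, one has for every $\boldsymbol{x}\in\mathcal{D}$ $$\mathbb{E}\big[\|\boldsymbol{v}_t\|\ \big|\ \boldsymbol{v}_{t-1}=\boldsymbol{x}\big]\le\varphi\|\boldsymbol{x}\|+c.$$
   Context: Model (GARCH-2F): $Z_{1,t},Z_{2,t}$ i.i.d. $N(0,1)$ in $t$, mutually independent; $\boldsymbol{W}_t=(W_{1,t},W_{2,t})^T=(Z_{1,t-1},Z_{2,t-1})^T$ (independent of $\boldsymbol{v}_{t-1}$); $\boldsymbol{v}_t=\boldsymbol{\omega}+\boldsymbol{\beta}\boldsymbol{v}_{t-1}+\boldsymbol{\alpha}\big[(W_{1,t}-\gamma_1\sqrt{v_{1,t-1}})^2,(W_{2,t}-\gamma_2\sqrt{v_{2,t-1}})^2\big]^T$ with parameters as in Assumption 1 ($\omega_i>0$, $\beta_{ij}\ge0$, $\alpha_{ij}\ge0$, $\alpha_{11}+\alpha_{12}>0$, $\alpha_{21}+\alpha_{22}>0$, $\beta_{11}+\beta_{12}>0$, $\beta_{21}+\beta_{22}>0$), $\gamma_1,\gamma_2\in\mathbb{R}$. State space $\mathcal{D}=[\omega_1,\infty)\times[\omega_2,\infty)$. $\boldsymbol{B}$ has entries $B_{ij}=\beta_{ij}+\alpha_{ij}\gamma_j^2$.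 $\boldsymbol{f}(\boldsymbol{W}_t)=\big((|\gamma_1|+\sqrt{\gamma_1^2+W_{1,t}^2})^2,(|\gamma_2|+\sqrt{\gamma_2^2+W_{2,t}^2})^2\big)^T$ and $\boldsymbol{b}(\boldsymbol{W}_t)$ is the $2\times2$ matrix with entries $b_{ij}=\alpha_{ij}W_{j,t}^2\mathbf{1}_{(\gamma_jW_{j,t}<0)}$. $\|\cdot\|$ is the Euclidean vector norm and the induced ($L_2$ operator) matrix norm. *)

From HB Require Import structures.
From mathcomp Require Import all_boot all_order all_algebra.
From mathcomp Require Import all_classical all_reals all_analysis.
Set Implicit Arguments. Unset Strict Implicit. Unset Printing Implicit Defensive.
Import Order.TTheory GRing.Theory Num.Theory.
Local Open Scope ring_scope.
Local Open Scope classical_set_scope.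

Definition vnorm {R : realType} {n : nat} (v : 'cV[R]_n) : R :=
  Num.sqrt (\sum_(i < n) v i 0 ^+ 2).

Definition opnorm {R : realType} {n : nat} (M : 'M[R]_n) : R :=
  sup [set vnorm (M *m x) | x in [set x : 'cV[R]_n | vnorm x = 1]].

Definition cv2 {R : realType} (a b : R) : 'cV[R]_2 :=
  \col_(i < 2) (if i == 0 :> nat then a else b).

(* Standard bivariate Gaussian law of W_t = (W_1, W_2): product of two
   independent N(0,1). *)
Definition stdnormal2 {R : realType} := (normal_prob (0:R) 1 \x normal_prob (0:R) 1)%E.

Definition assumption1 {R : realType} (omega : 'cV[R]_2) (alpha beta : 'M[R]_2) : Prop :=
  [/\ forall i, 0 < omega i 0,
      forall i j, 0 <= beta i j,
      forall i j, 0 <= alpha i j,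
      forall i, 0 < \sum_(j < 2) alpha i j
    & forall i, 0 < \sum_(j < 2) beta i j].

Definition in_D {R : realType} (omega x : 'cV[R]_2) : Prop :=
  forall i, omega i 0 <= x i 0.

(* One step of the GARCH-2F recursion: v_t given v_{t-1} = x and W_t = w. *)
Definition garch_step {R : realType} (omega : 'cV[R]_2) (alpha beta : 'M[R]_2)
  (g1 g2 : R) (x : 'cV[R]_2) (w : R * R) : 'cV[R]_2 :=
  omega + beta *m x
  + alpha *m cv2 ((w.1 - g1 * Num.sqrt (x 0 0)) ^+ 2)
                 ((w.2 - g2 * Num.sqrt (x 1 0)) ^+ 2).

(* Conditional expectation E[ ||v_t|| | v_{t-1} = x ]: since W_t is independent
   of v_{t-1}, it is the integral of ||step(x, w)|| against the law of W_t. *)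
Definition cond_exp_norm {R : realType} (omega : 'cV[R]_2) (alpha beta : 'M[R]_2)
  (g1 g2 : R) (x : 'cV[R]_2) : \bar R :=
  (\int[stdnormal2]_w (vnorm (garch_step omega alpha beta g1 g2 x w))%:E)%E.

Definition Bmat {R : realType} (alpha beta : 'M[R]_2) (g1 g2 : R) : 'M[R]_2 :=
  \matrix_(i < 2, j < 2) (beta i j + alpha i j * (if j == 0 :> nat then g1 else g2) ^+ 2).

Definition bmat {R : realType} (alpha : 'M[R]_2) (g1 g2 : R) (w : R * R) : 'M[R]_2 :=
  \matrix_(i < 2, j < 2)
    (let wj := if j == 0 :> nat then w.1 else w.2 in
     let gj := if j == 0 :> nat then g1 else g2 in
     alpha i j * wj ^+ 2 * (if gj * wj < 0 then 1 else 0)).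

Definition fvec {R : realType} (g1 g2 : R) (w : R * R) : 'cV[R]_2 :=
  cv2 ((`|g1| + Num.sqrt (g1 ^+ 2 + w.1 ^+ 2)) ^+ 2)
      ((`|g2| + Num.sqrt (g2 ^+ 2 + w.2 ^+ 2)) ^+ 2).

Definition phi_const {R : realType} (alpha beta : 'M[R]_2) (g1 g2 : R) : \bar R :=
  (\int[stdnormal2]_w (opnorm (Bmat alpha beta g1 g2 + bmat alpha g1 g2 w))%:E)%E.

Definition c_const {R : realType} (omega : 'cV[R]_2) (alpha : 'M[R]_2) (g1 g2 : R) : \bar R :=
  ((vnorm omega)%:E + \int[stdnormal2]_w (vnorm (alpha *m fvec g1 g2 w))%:E)%E.

From HB Require Import structures.
From mathcomp Require Import all_boot all_order all_algebra.
From mathcomp Require Import all_classical all_reals all_analysis.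
From mathcomp Require Import measurable_realfun ring lra.

(* For v >= 0 one has (w - g sqrt v)^2 <= g^2 v + w^2 1_{g w < 0} v
   + (|g| + sqrt (g^2 + w^2))^2; hence, coordinatewise,
   0 <= v_t <= omega + (B + b(W_t)) x + alpha f(W_t), and by monotonicity and
   the triangle inequality of the Euclidean norm,
   ||v_t|| <= ||B + b(W_t)|| ||x|| + ||omega|| + ||alpha f(W_t)||. *)

Set Implicit Arguments.
Unset Strict Implicit.
Unset Printing Implicit Defensive.
Import Order.TTheory GRing.Theory Num.Theory.
Local Open Scope ring_scope.

Section EuclideanNorm.
Variables (R : realType) (n : nat).
Implicit Types (u v : 'cV[R]_n).

Lemma addcvE u v i : (u + v) i 0 = u i 0 + v i 0.
Proof. by rewrite mxE. Qed.

Lemma vnorm_ge0 v : 0 <= vnorm v.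
Proof. exact: sqrtr_ge0. Qed.

Lemma vnormZ (c : R) v : vnorm (c *: v) = `|c| * vnorm v.
Proof.
rewrite /vnorm; under eq_bigr do rewrite mxE exprMn.
by rewrite -mulr_sumr sqrtrM ?sqr_ge0 // sqrtr_sqr.
Qed.

Lemma normr_le_vnorm v i : `|v i 0| <= vnorm v.
Proof.
rewrite -sqrtr_sqr ler_sqrt ?sumr_ge0 // => [|j _]; last exact: sqr_ge0.
by rewrite (bigD1 i) //= lerDl sumr_ge0 // => j _; rewrite sqr_ge0.
Qed.

Lemma vnorm_gt0 v i : v i 0 != 0 -> 0 < vnorm v.
Proof. by move=> vi0; apply: lt_le_trans (normr_le_vnorm v i); rewrite normr_gt0. Qed.

Lemma vnorm_le u v : (forall i, 0 <= u i 0 <= v i 0) -> vnorm u <= vnorm v.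
Proof.
move=> uv; rewrite ler_sqrt ?sumr_ge0 // => [|i _]; last exact: sqr_ge0.
apply: ler_sum => i _; have /andP[u0 uv_i] := uv i.
by rewrite ler_sqr ?nnegrE // (le_trans u0).
Qed.

End EuclideanNorm.

Section EuclideanPlane.
Variable R : realType.
Implicit Types (u v : 'cV[R]_2) (M : 'M[R]_2).

Lemma vnorm2E v : vnorm v = Num.sqrt (v 0 0 ^+ 2 + v 1 0 ^+ 2).
Proof.
rewrite /vnorm !big_ord_recl big_ord0 addr0.
by congr (Num.sqrt (v _ 0 ^+ 2 + v _ 0 ^+ 2)); apply: val_inj.
Qed.

Lemma mulmx2E M v i : (M *m v) i 0 = M i 0 * v 0 0 + M i 1 * v 1 0.
Proof.
rewrite mxE !big_ord_recl big_ord0 addr0.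
by congr (M i _ * v _ 0 + M i _ * v _ 0); apply: val_inj.
Qed.

Lemma sqr_vnorm2 v : vnorm v ^+ 2 = v 0 0 ^+ 2 + v 1 0 ^+ 2.
Proof. by rewrite vnorm2E sqr_sqrtr // addr_ge0 // sqr_ge0. Qed.

Lemma vnorm2_le_l1 v : vnorm v <= `|v 0 0| + `|v 1 0|.
Proof.
rewrite -ler_sqr ?nnegrE ?addr_ge0 ?vnorm_ge0 //.
have := sqr_vnorm2 v; rewrite -(real_normK (num_real (v 0 0))).
rewrite -(real_normK (num_real (v 1 0))).
have := normr_ge0 (v 0 0); have := normr_ge0 (v 1 0); nra.
Qed.

Lemma vnormD u v : vnorm (u + v) <= vnorm u + vnorm v.
Proof.
rewrite -ler_sqr ?nnegrE ?addr_ge0 ?vnorm_ge0 //.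
(* Cauchy-Schwarz in the plane, via Lagrange's identity *)
have cs : u 0 0 * v 0 0 + u 1 0 * v 1 0 <= vnorm u * vnorm v.
  apply: le_trans (ler_norm _) _.
  rewrite -ler_sqr ?nnegrE ?mulr_ge0 ?vnorm_ge0 // real_normK ?num_real //.
  rewrite exprMn !sqr_vnorm2 -subr_ge0.
  have -> : (u 0 0 ^+ 2 + u 1 0 ^+ 2) * (v 0 0 ^+ 2 + v 1 0 ^+ 2)
      - (u 0 0 * v 0 0 + u 1 0 * v 1 0) ^+ 2
      = (u 0 0 * v 1 0 - u 1 0 * v 0 0) ^+ 2 by ring.
  exact: sqr_ge0.
have := sqr_vnorm2 (u + v); have := sqr_vnorm2 u; have := sqr_vnorm2 v.
by rewrite !mxE; nra.
Qed.

Lemma opnorm_has_sup M :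
  has_sup [set vnorm (M *m x) | x in [set x : 'cV[R]_2 | vnorm x = 1]].
Proof.
split.
  exists (vnorm (M *m cv2 1 0)), (cv2 1 0) => //.
  by rewrite /= vnorm2E !mxE /= expr1n expr0n addr0 sqrtr1.
exists (`|M 0 0| + `|M 0 1| + (`|M 1 0| + `|M 1 1|)) => _ [y /= y1 <-].
have y_le1 i : `|y i 0| <= 1 by rewrite -y1 normr_le_vnorm.
apply: le_trans (vnorm2_le_l1 _) _; rewrite !mulmx2E.
by apply: lerD; apply: le_trans (ler_normD _ _) _; rewrite !normrM;
  apply: lerD; apply: ler_piMr.
Qed.

Lemma opnorm_ge0 M : 0 <= opnorm M.
Proof.
have [[_ [y y1 _]] _] := opnorm_has_sup M.
apply: le_trans (vnorm_ge0 (M *m y)) _.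
by apply: (sup_upper_bound (opnorm_has_sup M)); exists y.
Qed.

Lemma vnorm_mulmx_le M x : 0 < vnorm x -> vnorm (M *m x) <= opnorm M * vnorm x.
Proof.
move=> x_gt0; rewrite -ler_pdivrMr //.
have -> : vnorm (M *m x) / vnorm x = vnorm (M *m ((vnorm x)^-1 *: x)).
  by rewrite -scalemxAr vnormZ gtr0_norm ?invr_gt0 // mulrC.
apply: (sup_upper_bound (opnorm_has_sup M)); exists ((vnorm x)^-1 *: x) => //.
by rewrite /= vnormZ gtr0_norm ?invr_gt0 // mulVf ?gt_eqF.
Qed.

End EuclideanPlane.

Section GarchStep.
Variable R : realType.

Lemma news_impact_le (g w v : R) : 0 <= v ->
  (w - g * Num.sqrt v) ^+ 2 <=
  g ^+ 2 * v + w ^+ 2 * (if g * w < 0 then 1 else 0) * v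
  + (`|g| + Num.sqrt (g ^+ 2 + w ^+ 2)) ^+ 2.
Proof.
move=> v0; set s := Num.sqrt v; set t := Num.sqrt (g ^+ 2 + w ^+ 2).
have vE : v = s ^+ 2 by rewrite sqr_sqrtr.
have tE : t ^+ 2 = g ^+ 2 + w ^+ 2 by rewrite sqr_sqrtr // addr_ge0 // sqr_ge0.
have s0 : 0 <= s := sqrtr_ge0 v.
have gt_ge0 : 0 <= `|g| * t by rewrite mulr_ge0 ?sqrtr_ge0.
have g2 : `|g| ^+ 2 = g ^+ 2 := real_normK (num_real g).
rewrite vE; case: ifP => [gw_lt0 | /negbT]; last first.
  rewrite -leNgt => gw_ge0; have := mulr_ge0 gw_ge0 s0; nra.
have := sqr_ge0 (w * s + g); nra.
Qed.

Variables (omega : 'cV[R]_2) (alpha beta : 'M[R]_2) (g1 g2 : R).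
Hypotheses (omega_ge0 : forall i, 0 <= omega i 0)
  (alpha_ge0 : forall i j, 0 <= alpha i j) (beta_ge0 : forall i j, 0 <= beta i j).

Lemma garch_step_ge0 (x : 'cV[R]_2) (w : R * R) i : (forall j, 0 <= x j 0) ->
  0 <= garch_step omega alpha beta g1 g2 x w i 0.
Proof.
move=> x_ge0; rewrite /garch_step !addcvE !mulmx2E !mxE /=.
by rewrite !addr_ge0 ?omega_ge0 ?(mulr_ge0 (alpha_ge0 _ _) (sqr_ge0 _))
  ?mulr_ge0 ?beta_ge0 ?x_ge0.
Qed.

Lemma garch_step_le (x : 'cV[R]_2) (w : R * R) i : (forall j, 0 <= x j 0) ->
  garch_step omega alpha beta g1 g2 x w i 0 <=
  (omega + (Bmat alpha beta g1 g2 + bmat alpha g1 g2 w) *m x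
   + alpha *m fvec g1 g2 w) i 0.
Proof.
move=> x_ge0.
have := ler_wpM2l (alpha_ge0 i 0) (news_impact_le g1 w.1 (x_ge0 0)).
have := ler_wpM2l (alpha_ge0 i 1) (news_impact_le g2 w.2 (x_ge0 1)).
rewrite /garch_step /fvec !addcvE !mulmx2E !mxE /=.
lra.
Qed.

Lemma vnorm_garch_step_le (x : 'cV[R]_2) (w : R * R) :
  (forall j, 0 <= x j 0) -> 0 < vnorm x ->
  vnorm (garch_step omega alpha beta g1 g2 x w) <=
  opnorm (Bmat alpha beta g1 g2 + bmat alpha g1 g2 w) * vnorm x
  + (vnorm omega + vnorm (alpha *m fvec g1 g2 w)).
Proof.
move=> x_ge0 x_gt0.
set M := Bmat alpha beta g1 g2 + bmat alpha g1 g2 w; set F := alpha *m fvec g1 g2 w.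
have step_le : vnorm (garch_step omega alpha beta g1 g2 x w)
    <= vnorm (omega + M *m x + F).
  by apply: vnorm_le => i; rewrite garch_step_ge0 ?garch_step_le.
have := vnormD (omega + M *m x) F; have := vnormD omega (M *m x).
have := vnorm_mulmx_le M x_gt0; lra.
Qed.
End GarchStep.

Section IntegralBounds.
Local Open Scope ereal_scope.
Context d (T : measurableType d) (R : realType).
Variable mu : {measure set T -> \bar R}.

Lemma ge0_le_integral_nonmeasurable (f g : T -> \bar R) :
  (forall t, 0 <= f t) -> (forall t, f t <= g t) ->
  \int[mu]_t f t <= \int[mu]_t g t.
Proof.
move=> f_ge0 fg; have g_ge0 t : 0 <= g t := le_trans (f_ge0 t) (fg t).
rewrite !ge0_integralTE //; apply: ge_ereal_sup => _ [h hf <-].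
by apply: ereal_sup_ubound; exists h => // t; exact: le_trans (hf t) (fg t).
Qed.

Lemma le_integral_mulr_add (S K H : T -> R) (a : R) : (0 < a)%R ->
  measurable_fun setT S -> measurable_fun setT H ->
  (forall t, 0 <= S t)%R -> (forall t, 0 <= K t)%R -> (forall t, 0 <= H t)%R ->
  (forall t, S t <= K t * a + H t)%R ->
  \int[mu]_t (S t)%:E <= (\int[mu]_t (K t)%:E) * a%:E + \int[mu]_t (H t)%:E.
Proof.
move=> a_gt0 mS mH S_ge0 K_ge0 H_ge0 S_le.
pose k t := (Num.max (S t - H t) 0 / a)%R.
have mk : measurable_fun setT k.
  apply: measurable_funM; last exact: measurable_cst.
  by apply: measurable_maxr; [exact: measurable_funB | exact: measurable_cst].
have k_ge0 t : (0 <= k t)%R by rewrite divr_ge0 ?le_max ?lexx ?orbT ?ltW.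
have k_le t : (k t <= K t)%R.
  by rewrite /k ler_pdivrMr // ge_max lerBlDr S_le mulr_ge0 ?K_ge0 ?ltW.
have S_le_k t : (S t <= k t * a + H t)%R.
  by rewrite /k divfK ?gt_eqF // -lerBlDr le_max lexx.
apply: (@le_trans _ _ (\int[mu]_t ((k t)%:E * a%:E + (H t)%:E))).
  apply: ge0_le_integral => //.
  - by move=> t _; rewrite lee_fin.
  - exact/measurable_EFinP.
  - apply: emeasurable_funD; last exact/measurable_EFinP.
    by apply: emeasurable_funM; [exact/measurable_EFinP | exact: measurable_cst].
  - by move=> t _; rewrite -EFinM -EFinD lee_fin.
rewrite ge0_integralD //; first last.
- exact/measurable_EFinP.
- by move=> t _; rewrite lee_fin.
- by apply: emeasurable_funM; [exact/measurable_EFinP | exact: measurable_cst].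
- by move=> t _; rewrite -EFinM lee_fin mulr_ge0 ?k_ge0 ?ltW.
rewrite ge0_integralZr //; first last.
- by rewrite lee_fin ltW.
- by move=> t _; rewrite lee_fin.
- exact/measurable_EFinP.
rewrite leeD2r //; apply: lee_wpmul2r; first by rewrite lee_fin ltW.
by apply: ge0_le_integral_nonmeasurable => t; rewrite lee_fin.
Qed.

Lemma integral_cstD (c : R) (h : T -> R) : mu setT = 1 -> (0 <= c)%R ->
  measurable_fun setT h -> (forall t, 0 <= h t)%R ->
  \int[mu]_t (c + h t)%:E = c%:E + \int[mu]_t (h t)%:E.
Proof.
move=> mu1 c_ge0 mh h_ge0; under eq_integral do rewrite EFinD.
rewrite ge0_integralD //; first last.
- exact/measurable_EFinP.
- by move=> t _; rewrite lee_fin.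
by rewrite integral_cst // mu1 mule1.
Qed.

End IntegralBounds.

Lemma stdnormal2_setT (R : realType) : stdnormal2 [set: R * R] = 1%E.
Proof.
rewrite /stdnormal2 -setXTT product_measure1E //.
by rewrite -[RHS](mule1 1%E); congr (_ * _)%E; exact: probability_setT.
Qed.

Section GarchMeasurability.
Variables (R : realType) (omega : 'cV[R]_2) (alpha beta : 'M[R]_2) (g1 g2 : R).
(* the sigma-algebra on R carried by the domain of [normal_prob] *)
Local Notation W := (measurableTypeR R * measurableTypeR R)%type.

Ltac measurable_arith := repeat first [
  exact: measurable_cst | exact: measurable_fst | exact: measurable_snd
| apply: (measurableT_comp (continuous_measurable_fun (@sqrt_continuous _)))
| apply: measurable_funX | apply: measurable_funD | apply: measurable_funB
| apply: measurable_funM ].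

Lemma measurable_vnorm_garch_step x :
  measurable_fun setT (fun w : W => vnorm (garch_step omega alpha beta g1 g2 x w)).
Proof.
rewrite /garch_step; under eq_fun do rewrite vnorm2E !addcvE !mulmx2E !mxE.
measurable_arith.
Qed.

Lemma measurable_vnorm_fvec :
  measurable_fun setT (fun w : W => vnorm (alpha *m fvec g1 g2 w)).
Proof.
under eq_fun do rewrite vnorm2E !mulmx2E !mxE.
measurable_arith.
Qed.
End GarchMeasurability.

Theorem mainTheorem5 (R : realType) (omega : 'cV[R]_2) (alpha beta : 'M[R]_2)
  (g1 g2 : R) :
  assumption1 omega alpha beta ->
  (c_const omega alpha g1 g2 < +oo)%E ->
  forall x : 'cV[R]_2, in_D omega x ->
  (cond_exp_norm omega alpha beta g1 g2 x
     <= phi_const alpha beta g1 g2 * (vnorm x)%:E + c_const omega alpha g1 g2)%E.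
Proof.
move=> [omega_gt0 beta_ge0 alpha_ge0 _ _] _ x xD.
have omega_ge0 i : 0 <= omega i 0 := ltW (omega_gt0 i).
have x_ge0 i : 0 <= x i 0 := le_trans (omega_ge0 i) (xD i).
have x_gt0 : 0 < vnorm x.
  by apply: (@vnorm_gt0 _ _ x 0); rewrite gt_eqF // (lt_le_trans (omega_gt0 0)).
rewrite /cond_exp_norm /phi_const /c_const.
rewrite -(integral_cstD (stdnormal2_setT R) (vnorm_ge0 omega)
  (measurable_vnorm_fvec alpha g1 g2)) => [|w]; last exact: vnorm_ge0.
apply: le_integral_mulr_add => //.
- exact: measurable_vnorm_garch_step.
- apply: measurable_funD; [exact: measurable_cst | exact: measurable_vnorm_fvec].
- by move=> w; rewrite vnorm_ge0.
- by move=> w; rewrite opnorm_ge0.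
- by move=> w; rewrite addr_ge0 ?vnorm_ge0.
- by move=> w; apply: vnorm_garch_step_le.
Qed.
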